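(* If a $C_{p^rq^s}$-transfer system has three or more connected components, then it is not lesser simply paired.
   Context: $p,q$ are distinct primes and $r,s\ge 0$ integers. The subgroups of $C_{p^rq^s}$ are identified with grid points $(i,j)$, $0\le i\le r$, $0\le j\le s$, where $(i,j)$ stands for $C_{p^iq^j}$ (intersection is coordinatewise minimum). A $C_{p^rq^s}$-transfer system is a partial order $\to$ on these vertices such that: $(i_1,j_1)\to(i_2,j_2)$ implies $i_1\le i_2$, $j_1\le j_2$; it is reflexive and transitive; and $(i_1,j_1)\to(i_2,j_2)$ implies $(\min\{i_1,a\},\min\{j_1,b\})\to(\min\{i_2,a\},\min\{j_2,b\})$ for every vertex $(a,b)$. Connected components are those of the underlying undirected graph. A transfer system is saturated if whenever $L\le K\le H$ and $L\to H$ is in it then $K\to H$ is in it; $\mathrm{Hull}(T)$ is the smallest saturated transfer system containing $T$; $T_c$ is the complete transfer system (all $K\to H$ with $K\le H$). A pair $(T,T')$ is compatible if $T\subseteq T'$ and for all subgroups $A,B,C$ with $B,C\le A$: if $B\to A$ is in $T$ and $B\cap C\to B$ is in $T'$ then $C\to A$ is in $T'$. $T$ is lesser simply paired if for every transfer system $T'\supseteq T$, $(T,T')$ is compatible iff $T'\in\{\mathrm{Hull}(T),T_c\}$. *)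

From mathcomp Require Import all_boot.
Set Implicit Arguments. Unset Strict Implicit. Unset Printing Implicit Defensive.

(* Subgroups of C_{p^r q^s}: grid points (i,j), 0 <= i <= r, 0 <= j <= s;
   (i,j) stands for C_{p^i q^j}. *)
Definition vert (r s : nat) : finType := ('I_r.+1 * 'I_s.+1)%type.

(* subgroup inclusion: coordinatewise order *)
Definition leV {r s : nat} (x y : vert r s) : bool :=
  (x.1 <= y.1)%N && (x.2 <= y.2)%N.

(* intersection: coordinatewise minimum *)
Definition meetV {r s : nat} (x a : vert r s) : vert r s :=
  ((if (x.1 <= a.1)%N then x.1 else a.1), (if (x.2 <= a.2)%N then x.2 else a.2)).

(* A C_{p^r q^s}-transfer system, as a relation  T K H  meaning  K -> H. *)
Definition transfer_system {r s : nat} (T : rel (vert r s)) : Prop :=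
  [/\ (forall x y, T x y -> leV x y),
      (forall x, T x x),
      (forall x y z, T x y -> T y z -> T x z)
    & (forall x y a, T x y -> T (meetV x a) (meetV y a))].

Definition saturated {r s : nat} (T : rel (vert r s)) : Prop :=
  forall L K H, leV L K -> leV K H -> T L H -> T K H.

Definition Hull {r s : nat} (T : rel (vert r s)) (x y : vert r s) : Prop :=
  forall S : rel (vert r s), transfer_system S -> saturated S ->
    (forall a b, T a b -> S a b) -> S x y.

Definition Tc {r s : nat} : rel (vert r s) := fun x y => leV x y.

Definition compatible {r s : nat} (T T' : rel (vert r s)) : Prop :=
  (forall a b, T a b -> T' a b) /\
  (forall A B C : vert r s, leV B A -> leV C A ->
     T B A -> T' (meetV B C) B -> T' C A).

Definition lesser_simply_paired {r s : nat} (T : rel (vert r s)) : Prop :=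
  forall T' : rel (vert r s), transfer_system T' ->
    (forall a b, T a b -> T' a b) ->
    (compatible T T' <->
       ((forall x y, T' x y <-> Hull T x y) \/ (forall x y, T' x y = Tc x y))).

Definition connectedV {r s : nat} (T : rel (vert r s)) : rel (vert r s) :=
  connect (fun x y => T x y || T y x).

Definition three_or_more_components {r s : nat} (T : rel (vert r s)) : Prop :=
  exists a b c : vert r s,
    [/\ ~~ connectedV T a b, ~~ connectedV T a c & ~~ connectedV T b c].

(* Write x ~ y for connectivity in T.  Restriction along meets shows that
   x ~ y exactly when x and y have a common T-source, so ~ is preserved by
   meets and by moving the smaller end of a relation upwards.  Hence both
   "x <= y and x ~ y" and "x <= y and (x ~ y or y is off the component of the
   top)" are saturated transfer systems containing T, and any such system is
   compatible with T.  Three components provide a vertex y connected neither to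
   the bottom nor to the top: bottom -> y lies in the second system but not in
   the first, which contains Hull T, and y -> top does not lie in the second. *)
From mathcomp Require Import all_boot.
From mathcomp Require Import zify.
Set Implicit Arguments. Unset Strict Implicit. Unset Printing Implicit Defensive.

Section Vertices.
Variables r s : nat.
Implicit Types x y z a : vert r s.

Definition botV : vert r s := (ord0, ord0).
Definition topV : vert r s := (ord_max, ord_max).

Lemma leV_refl x : leV x x.
Proof. by rewrite /leV !leqnn. Qed.

Lemma leV_trans x y z : leV x y -> leV y z -> leV x z.
Proof.
move=> /andP[x1y1 x2y2] /andP[y1z1 y2z2].
by apply/andP; split; [apply: leq_trans y1z1 | apply: leq_trans y2z2].
Qed.

Lemma leV_bot x : leV botV x.
Proof. by []. Qed.

Lemma leV_top x : leV x topV.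
Proof. by apply/andP; split; apply: leq_ord. Qed.

Lemma meetV1 x a : nat_of_ord (meetV x a).1 = minn x.1 a.1.
Proof. by rewrite /meetV /=; case: ifP; lia. Qed.

Lemma meetV2 x a : nat_of_ord (meetV x a).2 = minn x.2 a.2.
Proof. by rewrite /meetV /=; case: ifP; lia. Qed.

Lemma meetVC x y : meetV x y = meetV y x.
Proof.
case: (meetV x y) (meetV1 x y) (meetV2 x y) => u1 u2 /= e1 e2.
case: (meetV y x) (meetV1 y x) (meetV2 y x) => v1 v2 /= f1 f2.
by congr pair; apply: val_inj; rewrite /= ?e1 ?f1 ?e2 ?f2 minnC.
Qed.

Lemma meetV_idPl x y : leV x y -> meetV x y = x.
Proof. by case: x y => [x1 x2] [y1 y2] /andP[/= h1 h2]; rewrite /meetV h1 h2. Qed.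

Lemma meetV_idPr x y : leV y x -> meetV x y = y.
Proof. by rewrite meetVC; apply: meetV_idPl. Qed.

Lemma leV_meetl x a : leV (meetV x a) x.
Proof. by rewrite /leV meetV1 meetV2 !geq_minl. Qed.

Lemma leV_meetr x a : leV (meetV x a) a.
Proof. by rewrite /leV meetV1 meetV2 !geq_minr. Qed.

Lemma leV_meet2r x y a : leV x y -> leV (meetV x a) (meetV y a).
Proof. by rewrite /leV !meetV1 !meetV2 => /andP[? ?]; apply/andP; split; lia. Qed.

Lemma saturated_compatible (T S : rel (vert r s)) :
  transfer_system S -> saturated S -> (forall a b, T a b -> S a b) ->
  compatible T S.
Proof.
move=> [_ _ S_trans _] S_sat TS; split=> // A B C _ CA BA BCB.
exact: S_sat (leV_meetr B C) CA (S_trans _ _ _ BCB (TS _ _ BA)).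
Qed.

End Vertices.

Section Connectivity.
Variables r s : nat.
Variable T : rel (vert r s).
Hypothesis T_ts : transfer_system T.
Implicit Types x y z k : vert r s.

Let T_le x y : T x y -> leV x y.
Proof. by case: T_ts => h _ _ _; apply: h. Qed.
Let T_refl x : T x x.
Proof. by case: T_ts. Qed.
Let T_trans x y z : T x y -> T y z -> T x z.
Proof. by case: T_ts => _ _ h _; apply: h. Qed.
Let T_meet x y a : T x y -> T (meetV x a) (meetV y a).
Proof. by case: T_ts => _ _ _ h; apply: h. Qed.

Lemma connectedVC x y : connectedV T x y = connectedV T y x.
Proof. by apply: sym_connect_sym => u v; apply: orbC. Qed.

Lemma connectedV_trans y x z :
  connectedV T x y -> connectedV T y z -> connectedV T x z.
Proof. exact: connect_trans. Qed.

Lemma connectedV_edge x y : T x y -> connectedV T x y.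
Proof. by move=> xy; apply: connect1; rewrite xy. Qed.

Definition common_source x y := exists m, T m x /\ T m y.

Lemma common_source_connected x y : common_source x y -> connectedV T x y.
Proof.
case=> m [mx my]; apply: (connectedV_trans (y := m)); last exact: connectedV_edge.
by rewrite connectedVC; apply: connectedV_edge.
Qed.

Lemma common_source_trans z x y :
  common_source x z -> common_source z y -> common_source x y.
Proof.
case=> m1 [m1x m1z] [m2 [m2z m2y]].
have m12_m2 := T_meet m2 m1z; rewrite (meetV_idPr (T_le m2z)) in m12_m2.
have m21_m1 := T_meet m1 m2z; rewrite (meetV_idPr (T_le m1z)) meetVC in m21_m1.
by exists (meetV m1 m2); split; [apply: T_trans m21_m1 m1x | apply: T_trans m12_m2 m2y].
Qed.

Lemma connected_common_source x y : connectedV T x y -> common_source x y.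
Proof.
move/connectP=> [path_xy]; elim: path_xy x => [|z path_zy IH] x /=.
  by move=> _ ->; exists x; split; apply: T_refl.
move=> /andP[/orP[xz|zx] /IH zy] /zy{}zy; apply: common_source_trans zy.
  by exists x; split=> //; apply: T_refl.
by exists z; split=> //; apply: T_refl.
Qed.

Lemma connectedV_meet x y a :
  connectedV T x y -> connectedV T (meetV x a) (meetV y a).
Proof.
move/connected_common_source=> [m [mx my]].
by apply: common_source_connected; exists (meetV m a); split; apply: T_meet.
Qed.

Lemma connectedV_sat x k y :
  leV x k -> leV k y -> connectedV T x y -> connectedV T k y.
Proof.
move=> xk ky /connected_common_source[m [mx my]].
have mk_x := T_meet k mx; rewrite (meetV_idPl xk) in mk_x.
have mk_k := T_meet k my; rewrite (meetV_idPr ky) in mk_k.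
apply: connectedV_trans (common_source_connected (ex_intro _ m (conj mx my))).
by rewrite connectedVC; apply: common_source_connected; exists (meetV m k).
Qed.

Lemma connectedV_top_up x y :
  leV x y -> connectedV T x (topV r s) -> connectedV T y (topV r s).
Proof.
move=> xy /connected_common_source[m [mx mtop]].
have my := T_meet y mtop.
rewrite (meetV_idPl (leV_trans (T_le mx) xy)) (meetV_idPr (leV_top y)) in my.
by apply: common_source_connected; exists m.
Qed.

Definition within_component : rel (vert r s) :=
  fun x y => leV x y && connectedV T x y.

Definition complete_off_top : rel (vert r s) :=
  fun x y => leV x y && (connectedV T x y || ~~ connectedV T y (topV r s)).

Lemma sub_within_component x y : T x y -> within_component x y.
Proof. by move=> xy; rewrite /within_component T_le // connectedV_edge. Qed.

Lemma sub_complete_off_top x y : T x y -> complete_off_top x y.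
Proof. by move=> xy; rewrite /complete_off_top T_le // connectedV_edge. Qed.

Lemma within_component_ts : transfer_system within_component.
Proof.
split=> [x y /andP[] // | x | x y z /andP[xy cxy] /andP[yz cyz] | x y a /andP[xy cxy]].
- by rewrite /within_component leV_refl /connectedV connect0.
- by rewrite /within_component (leV_trans xy yz) (connectedV_trans cxy cyz).
- by rewrite /within_component leV_meet2r // connectedV_meet.
Qed.

Lemma within_component_sat : saturated within_component.
Proof.
move=> x k y xk ky /andP[_ cxy].
by rewrite /within_component ky (connectedV_sat xk ky cxy).
Qed.

Lemma complete_off_top_ts : transfer_system complete_off_top.
Proof.
split=> [x y /andP[] // | x | x y z /andP[xy cxy] /andP[yz cyz] | x y a /andP[xy cxy]].
- by rewrite /complete_off_top leV_refl /connectedV connect0.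
- rewrite /complete_off_top (leV_trans xy yz) /=.
  have [ztop|] := boolP (connectedV T z (topV r s)); last by rewrite orbT.
  rewrite ztop /= orbF in cyz *.
  have ytop := connectedV_trans cyz ztop.
  by rewrite ytop /= orbF in cxy; rewrite orbF (connectedV_trans cxy cyz).
- rewrite /complete_off_top leV_meet2r //=.
  case/orP: cxy => [cxy | ytop]; first by rewrite connectedV_meet.
  apply/orP; right; apply: contra ytop.
  exact: connectedV_top_up (leV_meetl y a).
Qed.

Lemma complete_off_top_sat : saturated complete_off_top.
Proof.
move=> x k y xk ky /andP[_ /orP[cxy | ytop]]; rewrite /complete_off_top ky /=.
  by rewrite (connectedV_sat xk ky cxy).
by rewrite ytop orbT.
Qed.

Lemma Hull_sub_within_component x y : Hull T x y -> within_component x y.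
Proof.
by apply; [exact: within_component_ts | exact: within_component_sat
          | exact: sub_within_component].
Qed.

Lemma three_components_avoid u v :
  three_or_more_components T ->
  exists y, ~~ connectedV T y u /\ ~~ connectedV T y v.
Proof.
case=> [a [b [c [nab nac nbc]]]].
have apart x y w : ~~ connectedV T x y -> connectedV T x w -> ~~ connectedV T y w.
  by move=> nxy xw; apply: contra nxy => yw; rewrite (connectedV_trans xw) // connectedVC.
have [au | nau] := boolP (connectedV T a u).
  have [bv | nbv] := boolP (connectedV T b v).
    by exists c; rewrite (apart _ _ _ nac au) (apart _ _ _ nbc bv).
  by exists b; rewrite (apart _ _ _ nab au).
have [av | nav] := boolP (connectedV T a v); last by exists a.
have [bu | nbu] := boolP (connectedV T b u).
  by exists c; rewrite (apart _ _ _ nac av) (apart _ _ _ nbc bu).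
by exists b; rewrite (apart _ _ _ nab av).
Qed.

End Connectivity.

Theorem mainTheorem12 (p q r s : nat) (T : rel (vert r s)) :
  prime p -> prime q -> p != q ->
  transfer_system T -> three_or_more_components T ->
  ~ lesser_simply_paired T.
Proof.
move=> _ _ _ T_ts three LSP.
have [y [ybot ytop]] := three_components_avoid (botV r s) (topV r s) three.
have [compat_iff _] := LSP _ (complete_off_top_ts T_ts) (sub_complete_off_top T_ts).
have compat := saturated_compatible (complete_off_top_ts T_ts)
  (complete_off_top_sat T_ts) (sub_complete_off_top T_ts).
case: (compat_iff compat) => [is_Hull | is_Tc].
- have /is_Hull/(Hull_sub_within_component T_ts) : complete_off_top T (botV r s) y.
    by rewrite /complete_off_top leV_bot ytop orbT.
  by rewrite /within_component connectedVC (negbTE ybot) andbF.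
- have := is_Tc y (topV r s).
  by rewrite /complete_off_top /Tc leV_top (negbTE ytop) /connectedV connect0.
Qed.
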